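(* Let $(\vartheta,\mathbb{P})$ be an arbitrary mutation law over $\mathcal{A}=\{a_0,\dots,a_{d-1}\}$, let $k\in\mathbb{N}$, and let $w$ be a word with $|w|\ge k$. Then \[\mathbb{E}\big[\mathbf{ct}^{(k)}_{\vartheta(w)}\big]=\frac{1}{|w|}\Big(\mathbf{M}^{(k)}+(|w|-k)\mathbf{I}\Big)\cdot\mathbf{ct}^{(k)}_w,\] where $\vartheta(w)$ is the result of a single mutation step applied to $w$.
   Context: Let $\mathcal{A}=\{a_0,\dots,a_{d-1}\}$ be a finite alphabet and $\mathcal{A}^\star$ the set of finite nonempty words. A mutation law assigns to each $a_t$ a finitely supported probability distribution $\mathbb{P}_{a_t}$ on $\mathcal{A}^\star$; $\vartheta(a_t)$ denotes a random word with law $\mathbb{P}_{a_t}$. A mutation step applied to $w=w_0\cdots w_{m-1}$ chooses $i\in\{0,\dots,m-1\}$ uniformly at random and replaces $w_i$ by an independent random word with law $\mathbb{P}_{w_i}$, giving $\vartheta(w)$. For words $u,v$ with $|u|\le|v|$, $\mathrm{ct}_v(u)$ is the number of $i\in\{0,\dots,|v|-1\}$ with $v_i\cdots v_{i+|u|-1}=u$, indices cyclic modulo $|v|$; $\mathbf{ct}^{(k)}_v=(\mathrm{ct}_v(u))_{u\in\mathcal{A}^k}\in\mathbb{R}^{d^k}$. The $k$-substitution matrix $\mathbf{M}^{(k)}$ is the $d^k\times d^k$ matrix indexed by $\mathcal{A}^k$ with, for $u,v\in\mathcal{A}^k$, $v=v_0\cdots v_{k-1}$, \[\mathbf{M}^{(k)}_{u,v}=\sum_{l\ge1}\sum_{\eta\in\mathcal{A}^l}\sum_{t\in[d]}\Pr(\vartheta(a_t)=\eta)\Big(\sum_{j=1}^{k-1}\mathbb{1}[v_j=a_t]\,\mathbb{1}\big[(v_0\cdots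 v_{j-1}\,\eta\,v_{j+1}\cdots v_{k-1})_{[k]}=u\big]+\sum_{j=0}^{l-1}\mathbb{1}[v_0=a_t]\,\mathbb{1}\big[(\eta\,v_1\cdots v_{k-1})_{j+[k]}=u\big]\Big),\] where for a word $x$, $x_{j+[k]}=x_jx_{j+1}\cdots x_{j+k-1}$ and $x_{[k]}$ is its first $k$ symbols. *)

From mathcomp Require Import all_boot all_order all_algebra.
Set Implicit Arguments. Unset Strict Implicit. Unset Printing Implicit Defensive.
Import Order.TTheory GRing.Theory Num.Theory.
Local Open Scope ring_scope.

(* A mutation law is given by, for each letter a, a finite support list
   [supp a] of words and weights [p a eta]; Pr(theta(a) = eta) is
   [mut_prob supp p a eta]. *)

Definition mutation_law (R : realFieldType) (d : nat)
  (supp : 'I_d -> seq (seq 'I_d)) (p : 'I_d -> seq 'I_d -> R) : Prop :=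
  [/\ forall a, uniq (supp a),
      forall a eta, eta \in supp a -> (0 < size eta)%N,
      forall a eta, eta \in supp a -> 0 <= p a eta
    & forall a, \sum_(eta <- supp a) p a eta = 1].

Definition mut_prob (R : realFieldType) (d : nat)
  (supp : 'I_d -> seq (seq 'I_d)) (p : 'I_d -> seq 'I_d -> R)
  (a : 'I_d) (eta : seq 'I_d) : R :=
  if eta \in supp a then p a eta else 0.

(* ct_v(u): number of i in [0, |v|) with v_i ... v_(i+|u|-1) = u, indices
   cyclic modulo |v| (meaningful for |u| <= |v|). *)
Definition ct (T : eqType) (u v : seq T) : nat :=
  count (fun i => take (size u) (rot i v) == u) (iota 0 (size v)).

Definition replace_at (T : Type) (w : seq T) (i : nat) (eta : seq T) : seq T :=
  take i w ++ eta ++ drop i.+1 w.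

(* E[ ct_{theta(w)}(u) ] for a single mutation step: position i uniform
   in [0,|w|), then w_i replaced by an independent theta(w_i). *)
Definition expected_ct (R : realFieldType) (d : nat)
  (supp : 'I_d -> seq (seq 'I_d)) (p : 'I_d -> seq 'I_d -> R)
  (w : seq 'I_d) (u : seq 'I_d) : R :=
  (size w)%:R^-1 *
  \sum_(i < size w)
     \sum_(eta <- supp (tnth (in_tuple w) i))
        mut_prob supp p (tnth (in_tuple w) i) eta
        * (ct u (replace_at w i eta))%:R.

(* The sum over
   all l >= 1 and eta in A^l is a sum over the (finite) support, outside of
   which Pr(theta(a_t) = eta) = 0.  [nth t v j == t] is v_j = a_t (j < k). *)
Definition subst_matrix (R : realFieldType) (d : nat)
  (supp : 'I_d -> seq (seq 'I_d)) (p : 'I_d -> seq 'I_d -> R)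
  (k : nat) (u v : k.-tuple 'I_d) : R :=
  \sum_(t < d) \sum_(eta <- supp t)
     mut_prob supp p t eta *
     ( (\sum_(1 <= j < k)
          ((nth t v j == t) &&
           (take k (take j v ++ eta ++ drop j.+1 v) == u))%:R)
     + (\sum_(0 <= j < size eta)
          ((nth t v 0 == t) &&
           (take k (drop j (eta ++ behead v)) == u))%:R) ).

(* Rotating [w] so that the mutated letter comes first, [replace_at w i eta]
   becomes [eta ++ behead x] with [x := rot i w], and its cyclic windows of
   length k fall into three families: the |eta| windows starting inside [eta]
   (the window [take k x] of [w] with its first letter replaced, read at every
   offset j), the |w| - k windows lying in [behead x] (windows of [w] that do
   not see position i), and for 1 <= j < k the window starting j letters
   before [eta] (a window of [w] whose letter j was replaced).  Averaging over
   i, the middle family contributes (|w| - k) ct_w(u), while the other two,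
   regrouped by the window of [w] they come from, are exactly the two sums
   in the definition of M^(k). *)

From mathcomp Require Import all_boot all_order all_algebra zify.
Import Order.TTheory GRing.Theory Num.Theory.
Set Implicit Arguments. Unset Strict Implicit. Unset Printing Implicit Defensive.

Lemma count_sum (T : Type) (a : pred T) (s : seq T) :
  count a s = \sum_(x <- s) (a x : nat).
Proof. by rewrite -sumn_count sumnE big_map. Qed.

Lemma count_iota_rev (g : nat -> bool) a b :
  count (fun r => g (a + b - r)) (iota a b) = \sum_(1 <= j < b.+1) (g j : nat).
Proof.
elim: b a => [|b IH] a; first by rewrite big_geq.
rewrite /= (eq_count (a2 := fun r => g (a.+1 + b - r))); last first.
  by move=> r; rewrite addnS addSn.
rewrite IH [RHS]big_nat_recr //= addnC.
by have ->: (a + b.+1 - a = b.+1)%N by lia.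
Qed.

Lemma big_ord_addn_mod (R : Type) (idx : R) (op : Monoid.com_law idx)
    n c (F : nat -> R) :
  (0 < n)%N -> \big[op/idx]_(i < n) F ((i + c) %% n) = \big[op/idx]_(i < n) F i.
Proof.
case: n => [//|n] _.
rewrite [RHS](reindex_inj (addIr (inZp c : 'I_n.+1))) /=.
by apply: eq_bigr => i _; rewrite /= modnDmr.
Qed.

Lemma take_cat_sub (T : Type) k (s1 s2 : seq T) :
  take k (s1 ++ s2) = take k s1 ++ take (k - size s1) s2.
Proof.
rewrite take_cat; case: ltnP => H; last by rewrite (take_oversize H).
have ->: (k - size s1 = 0)%N by lia.
by rewrite take0 cats0.
Qed.

Lemma take_behead_take (T : Type) m n (s : seq T) :
  (m <= n.-1)%N -> take m (behead (take n s)) = take m (behead s).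
Proof.
case: s => [|y s] //; case: n => [|n] /= H; last by rewrite take_takel.
have -> : m = 0%N by lia.
by rewrite !take0.
Qed.

Lemma rot_rot_mod (T : Type) (s : seq T) m n :
  (0 < size s)%N -> (m <= size s)%N -> (n <= size s)%N ->
  rot m (rot n s) = rot ((m + n) %% size s) s.
Proof.
move=> s0 ms ns; rewrite rot_add_mod //.
case: (ltngtP (m + n) (size s)) => H.
- by rewrite modn_small.
- have E : (m + n = (m + n - size s) + size s)%N by lia.
  rewrite {2}E modnDr; case: (ltnP (m + n - size s) (size s)) => H2.
    by rewrite modn_small.
  have -> : (m + n - size s = size s)%N by lia.
  by rewrite modnn rot0 rot_size.
- by rewrite H modnn rot0 rot_size.
Qed.

Lemma nth_rot (T : Type) (x0 : T) (s : seq T) m j :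
  (m < size s)%N -> (j < size s)%N ->
  nth x0 (rot m s) j = nth x0 s ((m + j) %% size s).
Proof.
move=> ms js; rewrite /rot nth_cat size_drop; case: ltnP => H.
  by rewrite nth_drop modn_small //; lia.
rewrite nth_take; last by lia.
have ->: (m + j = (j - (size s - m)) + size s)%N by lia.
by rewrite modnDr modn_small //; lia.
Qed.

Lemma rot_replace_at (T : Type) (w eta : seq T) i : (i < size w)%N ->
  rot i (replace_at w i eta) = eta ++ behead (rot i w).
Proof.
move=> iw; rewrite /replace_at /rot.
have St : size (take i w) = i by rewrite size_takel // ltnW.
rewrite (drop_size_cat _ St) (take_size_cat _ St).
have ->: drop i.+1 w = behead (drop i w) by rewrite -drop1 drop_drop add1n.
case E: (drop i w) => [|y z] /=; last by rewrite -catA.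
by move: (congr1 size E); rewrite size_drop /=; lia.
Qed.

Section CyclicWindows.

Variable T : eqType.
Implicit Types (u v x eta : seq T).

Lemma ct_sum u v :
  ct u v = \sum_(i < size v) (take (size u) (rot i v) == u : nat).
Proof.
by rewrite /ct count_sum -(subn0 (size v)) -/(index_iota 0 _) big_mkord subn0.
Qed.

Lemma ct_rot u v r : (r <= size v)%N -> ct u (rot r v) = ct u v.
Proof.
move=> rv; rewrite !ct_sum size_rot.
case: (posnP (size v)) => [->|v0]; first by rewrite !big_ord0.
rewrite -(big_ord_addn_mod _ r (fun i => (take (size u) (rot i v) == u : nat)) v0).
by apply: eq_bigr => i _; rewrite rot_rot_mod // ltnW.
Qed.

Definition head_windows k u x eta : nat :=
  \sum_(0 <= j < size eta) (take k (drop j (eta ++ behead (take k x))) == u : nat).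

Definition untouched_windows k u x : nat :=
  count (fun s => take k (rot s.+1 x) == u) (iota 0 (size x - k)).

(* The window [take k (rot (size x - j) x)] of [x] has its letter j replaced by [eta]. *)
Definition wrap_window k u x eta j : bool :=
  take k (take j (take k (rot (size x - j) x)) ++ eta
     ++ drop j.+1 (take k (rot (size x - j) x))) == u.

Definition wrap_windows k u x eta : nat :=
  \sum_(1 <= j < k) (wrap_window k u x eta j : nat).

Section Split.

Variables (k : nat) (x eta : seq T).
Hypotheses (k_gt0 : (0 < k)%N) (k_le_x : (k <= size x)%N) (eta_gt0 : (0 < size eta)%N).

Lemma take_rot_head j : (j < size eta)%N ->
  take k (rot j (eta ++ behead x)) = take k (drop j (eta ++ behead (take k x))).
Proof.
move=> je; rewrite /rot take_cat_sub size_drop size_cat size_behead.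
have ->: (k - (size eta + (size x).-1 - j) = 0)%N by lia.
rewrite take0 cats0 !drop_cat je !take_cat_sub.
by congr (_ ++ _); rewrite take_behead_take // size_drop; lia.
Qed.

Lemma take_rot_untouched s : (s < size x - k)%N ->
  take k (rot (size eta + s) (eta ++ behead x)) = take k (rot s.+1 x).
Proof.
move=> sk; rewrite /rot !take_cat_sub !size_drop size_cat size_behead.
have ->: (k - (size eta + (size x).-1 - (size eta + s)) = 0)%N by lia.
have ->: (k - (size x - s.+1) = 0)%N by lia.
rewrite !take0 !cats0 drop_cat.
have ->: (size eta + s < size eta)%N = false by lia.
by rewrite -drop1 drop_drop addKn addn1.
Qed.

Lemma take_rot_wrap j : (1 <= j)%N -> (j < k)%N ->
  let V := take k (rot (size x - j) x) in
  take k (rot (size eta + (size x).-1 - j) (eta ++ behead x)) =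
  take k (take j V ++ eta ++ drop j.+1 V).
Proof.
move=> j1 jk V; set n := size x; set m := size eta.
have Edrop : drop (m + n.-1 - j) (eta ++ behead x) = drop (n - j) x.
  rewrite drop_cat; have ->: (m + n.-1 - j < m)%N = false by lia.
  by rewrite -drop1 drop_drop; congr drop; lia.
have Etake : take (m + n.-1 - j) (eta ++ behead x) = eta ++ take (n.-1 - j) (behead x).
  rewrite take_cat; have ->: (m + n.-1 - j < m)%N = false by lia.
  by congr (_ ++ take _ _); lia.
have Sdrop : size (drop (n - j) x) = j by rewrite size_drop; lia.
have EV : V = drop (n - j) x ++ take (k - j) x.
  rewrite /V /rot take_cat_sub Sdrop take_oversize ?Sdrop 1?ltnW //.
  by rewrite take_takel //; lia.
rewrite /rot Edrop Etake EV (take_size_cat _ Sdrop) drop_cat Sdrop ltnNge leqnSn /=.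
have ->: (j.+1 - j = 1)%N by lia.
rewrite drop1 !take_cat_sub Sdrop; congr (_ ++ _ ++ _).
by rewrite take_takel ?take_behead_take //; lia.
Qed.

Lemma ct_cat_behead u : size u = k ->
  ct u (eta ++ behead x) =
  (head_windows k u x eta + untouched_windows k u x + wrap_windows k u x eta)%N.
Proof.
move=> Hu; rewrite /ct Hu size_cat size_behead.
have ->: (size eta + (size x).-1 = size eta + ((size x - k) + (k - 1)))%N by lia.
rewrite iotaD iotaD !count_cat add0n addnA; congr (_ + _ + _).
- rewrite count_sum /head_windows /index_iota subn0 !big_seq; apply: eq_bigr => j.
  by rewrite mem_iota add0n => /andP[_ Hj]; rewrite take_rot_head.
- rewrite -{1}(addn0 (size eta)) iotaDl count_map; apply: eq_in_count => s.
  by rewrite mem_iota add0n => /andP[_ Hs] /=; rewrite take_rot_untouched.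
- have Kb : k = (k - 1).+1 by lia.
  rewrite /wrap_windows [in RHS]Kb -(count_iota_rev _ (size eta + (size x - k))).
  apply: eq_in_count => r; rewrite mem_iota -Kb => /andP[H1 H2] /=.
  have Er : r = (size eta + (size x).-1 - (size eta + (size x - k) + (k - 1) - r))%N.
    by move: H1 H2 k_le_x k_gt0; clear; lia.
  by rewrite {1}Er take_rot_wrap //; move: H1 H2 k_le_x k_gt0; clear; lia.
Qed.

End Split.

Lemma sum_untouched_windows k u (w : seq T) : size u = k -> (0 < size w)%N ->
  (\sum_(i < size w) untouched_windows k u (rot i w) = (size w - k) * ct u w)%N.
Proof.
move=> Hu w0; rewrite /untouched_windows; under eq_bigr do rewrite size_rot count_sum.
rewrite exchange_big /= -{2}(subn0 (size w - k)) -sum_nat_const_nat /index_iota subn0.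
apply: eq_big_seq => s; rewrite mem_iota add0n => /andP[_ Hs].
rewrite ct_sum Hu -(big_ord_addn_mod _ s.+1 (fun i => (take k (rot i w) == u : nat)) w0).
by apply: eq_bigr => i _; rewrite rot_rot_mod 1?addnC //; [lia | exact: ltnW].
Qed.

End CyclicWindows.

Local Open Scope ring_scope.

Section MutationStep.

Variables (R : realFieldType) (d : nat).
Variables (supp : 'I_d -> seq (seq 'I_d)) (p : 'I_d -> seq 'I_d -> R).

Definition mut_expect (a : 'I_d) (F : seq 'I_d -> R) : R :=
  \sum_(eta <- supp a) mut_prob supp p a eta * F eta.

Lemma mut_expect_indicator (G : seq 'I_d -> R) c :
  \sum_(t < d) \sum_(eta <- supp t) mut_prob supp p t eta * ((c == t)%:R * G eta)
  = mut_expect c G.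
Proof.
rewrite (bigD1 c) //= [X in _ + X]big1 ?addr0.
  by apply: eq_bigr => eta _; rewrite eqxx mul1r.
move=> t Ht; apply: big1 => eta _.
by rewrite eq_sym (negbTE Ht) mul0r mulr0.
Qed.

Variables (k : nat) (w : seq 'I_d) (x0 : 'I_d) (u : k.-tuple 'I_d).
Hypotheses (k_gt0 : (0 < k)%N) (k_le_w : (k <= size w)%N).

Let n := size w.
Let n_gt0 : (0 < n)%N. Proof. exact: leq_trans k_le_w. Qed.

Definition head_expect i :=
  mut_expect (nth x0 w i) (fun eta => (head_windows k u (rot i w) eta)%:R).

Definition wrap_expect i j :=
  mut_expect (nth x0 w i) (fun eta => (wrap_window k u (rot i w) eta j)%:R).

Lemma expected_ct_split :
  (forall a eta, eta \in supp a -> (0 < size eta)%N) ->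
  (forall a, \sum_(eta <- supp a) p a eta = 1) ->
  expected_ct supp p w u = n%:R^-1 * \sum_(i < n)
    (head_expect i + (untouched_windows k u (rot i w))%:R
     + \sum_(1 <= j < k) wrap_expect i j).
Proof.
move=> supp_gt0 p_sum1; rewrite /expected_ct; congr (_ * _); apply: eq_bigr => i _.
have mut_prob_sum1 : \sum_(eta <- supp (nth x0 w i)) mut_prob supp p (nth x0 w i) eta = 1.
  rewrite -(p_sum1 (nth x0 w i)) !big_seq; apply: eq_bigr => eta Heta.
  by rewrite /mut_prob Heta.
have split_ct : {in supp (nth x0 w i), forall eta, ct u (replace_at w i eta) =
    (head_windows k u (rot i w) eta + untouched_windows k u (rot i w)
     + wrap_windows k u (rot i w) eta)%N}.
  move=> eta Heta; rewrite -(@ct_rot _ _ _ i); last first.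
    by rewrite size_cat size_takel ?leq_addr // ltnW.
  by rewrite rot_replace_at // (ct_cat_behead k_gt0 _ (supp_gt0 _ _ Heta))
    ?size_rot ?size_tuple.
rewrite (tnth_nth x0) /=.
under eq_big_seq => eta Heta do rewrite split_ct // !natrD !mulrDr.
rewrite !big_split /=; congr (_ + _ + _).
- by rewrite -mulr_suml mut_prob_sum1 mul1r.
- rewrite /wrap_expect /mut_expect exchange_big /=; apply: eq_bigr => eta _.
  by rewrite /wrap_windows natr_sum mulr_sumr.
Qed.

Definition window s : k.-tuple 'I_d := insubd u (take k (rot s w)).

Lemma window_val s : val (window s) = take k (rot s w).
Proof. by rewrite insubdK // unfold_in size_takel ?size_rot. Qed.

Lemma subst_matrix_mul_ct :
  \sum_(v : k.-tuple 'I_d) subst_matrix supp p u v * (ct v w)%:R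
  = \sum_(s < n) subst_matrix supp p u (window s).
Proof.
under eq_bigr do rewrite ct_sum size_tuple natr_sum mulr_sumr.
rewrite exchange_big /=; apply: eq_bigr => s _.
rewrite (bigD1 (window s)) //= -window_val eqxx mulr1 [X in _ + X]big1 ?addr0 //.
by move=> v /negbTE; rewrite -val_eqE eq_sym => ->; rewrite mulr0.
Qed.

Lemma subst_matrix_window (s : 'I_n) :
  subst_matrix supp p u (window s) =
  \sum_(1 <= j < k) wrap_expect ((s + j) %% n) j + head_expect s.
Proof.
rewrite /subst_matrix window_val.
have head_term t eta :
  (\sum_(0 <= j < size eta) ((nth t (take k (rot s w)) 0 == t) &&
      (take k (drop j (eta ++ behead (take k (rot s w)))) == u))%:R : R)
  = (nth x0 w s == t)%:R * (head_windows k u (rot s w) eta)%:R.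
  rewrite /head_windows natr_sum mulr_sumr; apply: eq_bigr => j _.
  rewrite -mulnb natrM nth_take // nth_rot // addn0 modn_small //.
  by rewrite (set_nth_default x0).
have wrap_term t eta :
  (\sum_(1 <= j < k) ((nth t (take k (rot s w)) j == t) &&
     (take k (take j (take k (rot s w)) ++ eta ++ drop j.+1 (take k (rot s w))) == u))%:R : R)
  = \sum_(1 <= j < k) (nth x0 w ((s + j) %% n) == t)%:R
       * (wrap_window k u (rot ((s + j) %% n) w) eta j)%:R.
  apply: eq_big_nat => j /andP[j1 jk].
  rewrite -mulnb natrM nth_take // nth_rot //; last by lia.
  rewrite (set_nth_default x0) ?ltn_mod //; congr (_ * _%:R).
  rewrite /wrap_window size_rot rot_rot_mod ?size_rot //; last 2 first.
  - by lia.
  - by apply: ltnW; rewrite ltn_mod.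
  suff -> : ((size w - j + (s + j) %% size w) %% size w = s)%N by [].
  rewrite modnDmr; have ->: (size w - j + (s + j) = s + size w)%N by lia.
  by rewrite modnDr modn_small.
under eq_bigr => t _ do under eq_bigr => eta _ do
  rewrite wrap_term head_term mulrDr mulr_sumr.
under eq_bigr do rewrite big_split /=.
rewrite big_split /=; congr (_ + _); last exact: mut_expect_indicator.
under eq_bigr do rewrite exchange_big /=.
rewrite exchange_big /=; apply: eq_bigr => j _.
exact: mut_expect_indicator.
Qed.

Lemma sum_subst_matrix_window :
  \sum_(s < n) subst_matrix supp p u (window s)
  = \sum_(s < n) (head_expect s + \sum_(1 <= j < k) wrap_expect s j).
Proof.
rewrite (eq_bigr _ (fun s _ => subst_matrix_window s)) !big_split /= addrC.
congr (_ + _); rewrite exchange_big [RHS]exchange_big /=; apply: eq_bigr => j _.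
exact: (big_ord_addn_mod _ j (fun i => wrap_expect i j) n_gt0).
Qed.

End MutationStep.

Theorem mainTheorem5 (R : realFieldType) (d : nat)
  (supp : 'I_d -> seq (seq 'I_d)) (p : 'I_d -> seq 'I_d -> R)
  (k : nat) (w : seq 'I_d) :
  mutation_law supp p -> (0 < k)%N -> (k <= size w)%N ->
  forall u : k.-tuple 'I_d,
    expected_ct supp p w u =
    (size w)%:R^-1 *
      (\sum_(v : k.-tuple 'I_d) subst_matrix supp p u v * (ct v w)%:R
       + (size w - k)%:R * (ct u w)%:R).
Proof.
move=> [_ supp_gt0 _ p_sum1] k_gt0 k_le_w u.
have w_gt0 : (0 < size w)%N := leq_trans k_gt0 k_le_w.
pose x0 := tnth (in_tuple w) (Ordinal w_gt0).
rewrite (expected_ct_split x0 u k_gt0 k_le_w) // subst_matrix_mul_ct //.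
rewrite (sum_subst_matrix_window supp p x0 u k_gt0 k_le_w); congr (_ * _).
rewrite -natrM -sum_untouched_windows ?size_tuple // natr_sum !big_split /=.
by rewrite addrAC.
Qed.
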